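(* In every configuration reached during a fair execution of Algorithm DLE from a permitted initial configuration, the following hold: (1) for any expanded particle, its head is in $S_e$ and its tail is not in $S_e$; (2) $S_e$ is simply-connected and non-empty; (3) every boundary point of $S_e$ is occupied by a particle; (4) the $eligible$ variables of all particles are consistent, i.e., for every particle $p$ and every port $i\in\{0,\dots,5\}$, $p.eligible[i]=true$ if and only if the point reached via port $i$ of $p$'s head is in $S_e$.
   Context: Geometry. The triangular grid $G$ has as vertices (''points'') the points of the regular triangular lattice in the plane, adjacent iff at unit distance; each point has six incident edges, cyclically ordered clockwise. A shape is a finite set of points (identified with its induced subgraph). For a connected shape $S$: the unbounded face is the outer face; a bounded face containing a grid point not in $S$ is a hole, whose grid points are hole points; the area of $S$ is $S$ together with its hole points; $S$ is simply-connected if it is connected with no holes; the outer boundary is the set of points of $S$ on the boundary of the outer face; a boundary point is a point of $S$ adjacent to a point not in $S$. For a boundary point $v$, a local boundary $B$ of $v$ w.r.t. $S$ is a maximal clockwise cyclic interval of consecutive edges at $v$ leading to points not in $S$, with boundary count $c(v,B)=|B|-2$. $v$ is redundant if its neighbors in $S$ induce a connected subgraph; erodable if redundant and on the outer boundary (then it has a single local boundary $B$); SCE if erodable and $c(v,B)>0$. Model (amoebot, strong scheduler). Anonymous constant-memory particles each occupy one point (contracted) or two adjacent points (expanded; head and tail); no point is occupied twice. Each particle labels the edges at its point by ports $0,\dots,5$; all share clockwise chirality, and a particle knows the port a neighbor uses for their common edge. Particles read and write neighbors' memories. A contracted particle may expand into an adjacent unoccupied point (its new head); an expanded one may contract into either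 of its points; handovers allowed. An execution is a sequence of atomic activations of single particles; in an activation a particle reads neighbors' memories, computes, writes memories, and performs at most one movement. A fair execution activates every particle infinitely often. A permitted initial configuration $C_0$: all particles contracted, at least one particle, set $S_P(C_0)$ of occupied points connected. Input: each particle knows, for each port $i$, whether the point via port $i$ lies in the outer face of $S_P(C_0)$. Algorithm DLE. It maintains a set $S_e$ of eligible points, initially the area of $S_P(C_0)$; points are only removed. Each particle $p$ has $status\in\{undecided,leader,follower\}$ (initially $undecided$) and $eligible[0..5]$ (initially $eligible[i]$ true iff the point via port $i$ is not in the outer face of $S_P(C_0)$). On activation: (a) if $p$ is expanded, it contracts into its head; (b) else if $p$ and all its neighbors have status $\ne undecided$, $p$ terminates; (c) else if $p.status=undecided$ ($p$ contracted at $v$): if by its $eligible$ array no neighbor of $v$ is in $S_e$, it sets $status:=leader$; else if $v$ is SCE w.r.t. $S_e$, then $v$ is removed from $S_e$ and each neighboring particle whose head is adjacent to $v$ sets its $eligible$ entry for $v$ to false; then, if $v$ has an adjacent point $u\in S_e$ not occupied by any particle, $p$ sets its $eligible$ entries to true except the one for the port from $u$ back to $v$ (set false) and expands into $u$; otherwise $p$ sets $status:=follower$. Otherwise $p$ does nothing. *)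

From Stdlib Require Import ZArith.
From mathcomp Require Import all_boot.

Set Implicit Arguments.
Unset Strict Implicit.
Unset Printing Implicit Defensive.

(* Points of the triangular lattice in axial coordinates:
   (a, b) is the planar point a*e1 + b*e2, e1 = (1,0), e2 = (1/2, sqrt3/2). *)
Definition pt : Type := (Z * Z)%type.

Definition pt_eqb (a b : pt) : bool := Z.eqb a.1 b.1 && Z.eqb a.2 b.2.

(* The six unit directions, listed in CLOCKWISE cyclic order
   (angles 0, -60, -120, 180, 120, 60 degrees); indices taken mod 6. *)
Definition dir (i : nat) : pt :=
  match i %% 6 with
  | 0 => (1, 0)%Z
  | 1 => (1, -1)%Z
  | 2 => (0, -1)%Z
  | 3 => (-1, 0)%Z
  | 4 => (-1, 1)%Z
  | _ => (0, 1)%Z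
  end.

Definition nbr (v : pt) (i : nat) : pt := ((v.1 + (dir i).1)%Z, (v.2 + (dir i).2)%Z).

Definition adj (u w : pt) : Prop := exists i, i < 6 /\ w = nbr u i.

Definition finite_set (A : pt -> Prop) : Prop :=
  exists l : seq pt, forall x, A x -> List.In x l.

Inductive conn (A : pt -> Prop) : pt -> pt -> Prop :=
| conn_refl x : A x -> conn A x x
| conn_step x y z : A x -> adj x y -> conn A y z -> conn A x z.

Definition connected (A : pt -> Prop) : Prop :=
  forall x y, A x -> A y -> conn A x y.

Definition pnorm (v : pt) : Z := (Z.abs v.1 + Z.abs v.2)%Z.

(* For the triangular grid, two grid points not in S lie in the same
   face of (the planar drawing of) S iff they are joined by a grid path
   avoiding S; the outer (unbounded) face thus contains exactly the grid
   points not in S from which one can walk, avoiding S, arbitrarily far. *)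
Definition outer_face (S : pt -> Prop) (v : pt) : Prop :=
  ~ S v /\ forall n : Z, exists w, (n <= pnorm w)%Z /\ conn (fun x => ~ S x) v w.

Definition hole_point (S : pt -> Prop) (v : pt) : Prop :=
  ~ S v /\ ~ outer_face S v.

Definition area (S : pt -> Prop) (v : pt) : Prop := S v \/ hole_point S v.

Definition simply_connected (S : pt -> Prop) : Prop :=
  finite_set S /\ connected S /\ forall v, ~ hole_point S v.

Definition outer_boundary (S : pt -> Prop) (v : pt) : Prop :=
  S v /\ exists i, i < 6 /\ outer_face S (nbr v i).

Definition boundary_point (S : pt -> Prop) (v : pt) : Prop :=
  S v /\ exists i, i < 6 /\ ~ S (nbr v i).

(* local boundary B of v: the maximal clockwise cyclic interval of edges
   at v in directions i, i+1, ..., i+k-1 (mod 6), all leading out of S;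
   |B| = k. *)
Definition local_boundary (S : pt -> Prop) (v : pt) (i k : nat) : Prop :=
  boundary_point S v /\ i < 6 /\ 0 < k <= 6 /\
  (forall j, j < k -> ~ S (nbr v (i + j))) /\
  (k < 6 -> S (nbr v (i + 5)) /\ S (nbr v (i + k))).

Definition boundary_count (k : nat) : Z := (Z.of_nat k - 2)%Z.

Definition redundant (S : pt -> Prop) (v : pt) : Prop :=
  connected (fun w => S w /\ adj v w).

Definition erodable (S : pt -> Prop) (v : pt) : Prop :=
  redundant S v /\ outer_boundary S v.

Definition SCE (S : pt -> Prop) (v : pt) : Prop :=
  erodable S v /\
  exists i k, local_boundary S v i k /\ (boundary_count k > 0)%Z.

Inductive status := Undecided | Leader | Follower.

(* State of one particle.  hd = head (the point if contracted);
   tl = Some t iff expanded with tail t.  Port j of the particle (at its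
   head) is the edge in global direction (ori + j) mod 6: all particles
   share clockwise chirality, only the offset ori is particle-specific.
   elig j (j < 6) is eligible[j]; term records termination. *)
Record pst := mkP {
  hd : pt; tl : option pt; ori : nat;
  stat : status; elig : nat -> bool; term : bool }.

Definition occupies (s : pst) (x : pt) : Prop := hd s = x \/ tl s = Some x.

Definition port_pt (s : pst) (j : nat) : pt := nbr (hd s) (ori s + j).

(* S_e is a ghost component of the configuration (the set of eligible points) *)
Record config (P : finType) := mkC { parts : P -> pst; Se : pt -> Prop }.

Definition upd (P : finType) (f : P -> pst) (p : P) (s : pst) : P -> pst :=
  fun q => if q == p then s else f q.

Definition set_contract (s : pst) : pst :=
  mkP (hd s) None (ori s) (stat s) (elig s) (term s).
Definition set_status (st : status) (s : pst) : pst :=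
  mkP (hd s) (tl s) (ori s) st (elig s) (term s).
Definition set_term (s : pst) : pst :=
  mkP (hd s) (tl s) (ori s) (stat s) (elig s) true.
Definition clear_elig (x : pt) (s : pst) : pst :=
  mkP (hd s) (tl s) (ori s) (stat s)
      (fun j => if (j < 6) && pt_eqb (port_pt s j) x then false else elig s j)
      (term s).
Definition expand_into (u v : pt) (s : pst) : pst :=
  mkP u (Some v) (ori s) (stat s)
      (fun j => ~~ pt_eqb (nbr u (ori s + j)) v) (term s).

Definition removed (S : pt -> Prop) (v : pt) : pt -> Prop := fun x => S x /\ x <> v.

Definition nbr_particle (P : finType) (C : config P) (p q : P) : Prop :=
  q <> p /\ exists x, occupies (parts C q) x /\ adj (hd (parts C p)) x.

Definition clear_others (P : finType) (C : config P) (p : P) (v : pt) : P -> pst :=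
  fun q => if q == p then parts C p else clear_elig v (parts C q).

Inductive activate (P : finType) (C : config P) (p : P) : config P -> Prop :=
| A_terminated :
    term (parts C p) = true -> activate C p C
| A_contract t :
    term (parts C p) = false -> tl (parts C p) = Some t ->
    activate C p (mkC (upd (parts C) p (set_contract (parts C p))) (Se C))
| A_terminate :
    term (parts C p) = false -> tl (parts C p) = None ->
    stat (parts C p) <> Undecided ->
    (forall q, nbr_particle C p q -> stat (parts C q) <> Undecided) ->
    activate C p (mkC (upd (parts C) p (set_term (parts C p))) (Se C))
| A_wait :
    term (parts C p) = false -> tl (parts C p) = None ->
    stat (parts C p) <> Undecided ->
    (exists q, nbr_particle C p q /\ stat (parts C q) = Undecided) ->
    activate C p C
| A_leader :
    term (parts C p) = false -> tl (parts C p) = None ->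
    stat (parts C p) = Undecided ->
    (forall j, j < 6 -> elig (parts C p) j = false) ->
    activate C p (mkC (upd (parts C) p (set_status Leader (parts C p))) (Se C))
| A_erode_expand u :
    term (parts C p) = false -> tl (parts C p) = None ->
    stat (parts C p) = Undecided ->
    (exists j, j < 6 /\ elig (parts C p) j = true) ->
    SCE (Se C) (hd (parts C p)) ->
    adj (hd (parts C p)) u -> removed (Se C) (hd (parts C p)) u ->
    (forall q, ~ occupies (parts C q) u) ->
    activate C p
      (mkC (upd (clear_others C p (hd (parts C p))) p
                (expand_into u (hd (parts C p)) (parts C p)))
           (removed (Se C) (hd (parts C p))))
| A_erode_follower :
    term (parts C p) = false -> tl (parts C p) = None ->
    stat (parts C p) = Undecided ->
    (exists j, j < 6 /\ elig (parts C p) j = true) ->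
    SCE (Se C) (hd (parts C p)) ->
    ~ (exists u, adj (hd (parts C p)) u /\ removed (Se C) (hd (parts C p)) u /\
                 forall q, ~ occupies (parts C q) u) ->
    activate C p
      (mkC (upd (clear_others C p (hd (parts C p))) p
                (set_status Follower (parts C p)))
           (removed (Se C) (hd (parts C p))))
| A_idle :
    term (parts C p) = false -> tl (parts C p) = None ->
    stat (parts C p) = Undecided ->
    (exists j, j < 6 /\ elig (parts C p) j = true) ->
    ~ SCE (Se C) (hd (parts C p)) ->
    activate C p C.

Definition occupied (P : finType) (C : config P) (x : pt) : Prop :=
  exists p, occupies (parts C p) x.

Definition permitted_initial (P : finType) (C : config P) : Prop :=
  (exists p : P, True) /\
  (forall p, tl (parts C p) = None) /\
  (forall p q, hd (parts C p) = hd (parts C q) -> p = q) /\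
  connected (occupied C) /\
  (forall p, stat (parts C p) = Undecided /\ term (parts C p) = false) /\
  (forall p j, j < 6 ->
     (elig (parts C p) j = true <-> ~ outer_face (occupied C) (port_pt (parts C p) j))) /\
  (forall x, Se C x <-> area (occupied C) x).

Definition execution (P : finType) (exec : nat -> config P) (sched : nat -> P) : Prop :=
  permitted_initial (exec 0) /\
  forall k, activate (exec k) (sched k) (exec k.+1).

Definition fair (P : finType) (sched : nat -> P) : Prop :=
  forall p k, exists k', k <= k' /\ sched k' = p.

Definition DLE_invariants (P : finType) (C : config P) : Prop :=
  (forall p t, tl (parts C p) = Some t -> Se C (hd (parts C p)) /\ ~ Se C t) /\
  (simply_connected (Se C) /\ exists x, Se C x) /\
  (forall x, boundary_point (Se C) x -> occupied C x) /\
  (forall p j, j < 6 ->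
     (elig (parts C p) j = true <-> Se C (port_pt (parts C p) j))).

(* Conditions (1)-(4), together with the fact that no point is occupied twice, form an
   inductive invariant.  Initially S_e is the area of a finite connected shape: it is
   connected (walking outwards from a hole point one runs into the shape), has no holes,
   its boundary points belong to the shape, and a point lies in it exactly when it is
   not in the outer face, which is the initial eligibility information.  Steps that keep
   S_e only contract particles or change their status.  When a particle erodes an SCE
   point v, S_e stays connected since v is redundant and hole-free since v touches the
   outer face; a point that becomes a boundary point must be an interior neighbour of v,
   and strict convexity (|B| >= 3) leaves v at most one such neighbour.  So the new
   boundary point is either occupied already or it is the free point into which the
   particle expands, which is interior because every boundary point is occupied. *)

From Stdlib Require Import ZArith Lia Classical FunctionalExtensionality PropExtensionality.
From mathcomp Require Import all_boot zify.

Set Implicit Arguments.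
Unset Strict Implicit.
Unset Printing Implicit Defensive.

Ltac case_residue i :=
  case: (i %% 6) (ltn_pmod i (isT : 0 < 6)) => [|[|[|[|[|[|?]]]]]] //= _.

Lemma nbr_mod v i : nbr v i = nbr v (i %% 6).
Proof. by rewrite /nbr /dir modn_mod. Qed.

Lemma nbr_modDl v i k : nbr v (i + k) = nbr v (i %% 6 + k).
Proof. by rewrite /nbr /dir modnDml. Qed.

Lemma nbrK v i : nbr (nbr v i) (i + 3) = v.
Proof.
rewrite nbr_modDl [nbr v i]nbr_mod.
by case_residue i; case: v => a b; rewrite /nbr /=; f_equal; lia.
Qed.

Lemma nbr_next v i : nbr (nbr v i) (i + 2) = nbr v (i + 1).
Proof.
rewrite nbr_modDl [nbr v i]nbr_mod [nbr v (i + 1)]nbr_modDl.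
by case_residue i; case: v => a b; rewrite /nbr /=; f_equal; lia.
Qed.

Lemma nbr_neq v i : nbr v i <> v.
Proof. rewrite nbr_mod; by case_residue i; case: v => a b; rewrite /nbr /= => -[]; lia. Qed.

Lemma nbr_shift v i d : exists2 m, m < 6 & nbr v d = nbr v (i + m).
Proof.
exists ((d + 6 - i %% 6) %% 6); first by rewrite ltn_pmod.
rewrite nbr_mod [RHS]nbr_mod; congr nbr; lia.
Qed.

Lemma adj_nbr v i : adj v (nbr v i).
Proof. by exists (i %% 6); rewrite ltn_pmod // -nbr_mod. Qed.

Lemma adj_sym u w : adj u w -> adj w u.
Proof. by move=> [i [_ ->]]; rewrite -{2}(nbrK u i); apply: adj_nbr. Qed.

Lemma adj_irrefl u : ~ adj u u.
Proof. by move=> [i [_ /esym]]; apply: nbr_neq. Qed.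

Lemma adj_nbrS v i : adj (nbr v i) (nbr v (i + 1)).
Proof. by rewrite -nbr_next; apply: adj_nbr. Qed.

Lemma pt_eqbP a b : reflect (a = b) (pt_eqb a b).
Proof.
case: a b => [a1 a2] [b1 b2]; rewrite /pt_eqb /=.
by apply: (iffP andP) => [[/Z.eqb_eq -> /Z.eqb_eq ->]|[-> ->]]; rewrite ?Z.eqb_refl.
Qed.

Lemma conn_l A x y : conn A x y -> A x.
Proof. by case. Qed.

Lemma conn_sub (A B : pt -> Prop) x y : (forall z, A z -> B z) -> conn A x y -> conn B x y.
Proof.
move=> AB; elim=> [z /AB Bz | a b c /AB Ba ab _ IH]; first exact: conn_refl.
exact: conn_step Ba ab IH.
Qed.

Lemma conn_trans A x y z : conn A x y -> conn A y z -> conn A x z.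
Proof. by elim=> // a b c Aa ab _ IH /IH; apply: conn_step. Qed.

Lemma conn_sym A x y : conn A x y -> conn A y x.
Proof.
elim=> [z Az | a b c Aa ab bc IH]; first exact: conn_refl.
apply: conn_trans IH _; apply: conn_step (conn_l bc) (adj_sym ab) _; exact: conn_refl.
Qed.

Lemma outer_face_step S x y : ~ S x -> adj x y -> outer_face S y -> outer_face S x.
Proof.
move=> Sx xy [_ far]; split=> // n; have [w [nw yw]] := far n.
by exists w; split; last exact: conn_step Sx xy yw.
Qed.

Lemma outer_face_sub (S S' : pt -> Prop) x :
  (forall z, S' z -> S z) -> outer_face S x -> outer_face S' x.
Proof.
move=> S'S [Sx far]; split=> [/S'S // | n]; have [w [nw xw]] := far n.
by exists w; split; last by apply: conn_sub xw => z Sz /S'S.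
Qed.

Definition interior (S : pt -> Prop) (x : pt) : Prop := S x /\ forall y, adj x y -> S y.

Lemma interiorP S x : S x -> ~ boundary_point S x -> interior S x.
Proof.
move=> Sx nbd; split=> // _ [j [j6 ->]].
by apply: NNPP => nS; apply: nbd; split=> //; exists j.
Qed.

(* A path through [v] is rerouted inside the connected neighbourhood of [v]. *)
Lemma connected_removed S v : connected S -> redundant S v -> connected (removed S v).
Proof.
move=> Sconn vred.
have reroute x z : conn S x z -> z <> v ->
    (x <> v -> conn (removed S v) x z) /\
    (x = v -> exists2 w, S w /\ adj v w & conn (removed S v) w z).
{ elim=> [a Sa | a b c Sa ab bc IH] cv.
  - by split=> // av; apply: conn_refl.
  have [IHb IHv] := IH cv.
  split=> [av | av]; case: (classic (b = v)) => bv.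
  - have [w Nw wc] := IHv bv.
    have Na : S a /\ adj v a by split=> //; rewrite -bv; apply: adj_sym.
    apply: conn_trans wc; apply: conn_sub (vred _ _ Na Nw) => y [Sy vy].
    by split=> // yv; apply: (@adj_irrefl v); rewrite -{2}yv.
  - exact: conn_step (conj Sa av) ab (IHb bv).
  - exact: IHv.
  - by exists b; [split; [exact: conn_l bc | rewrite -av] | exact: IHb]. }
by move=> x y [Sx xv] [Sy yv]; apply: (reroute x y (Sconn x y Sx Sy) yv).1.
Qed.

Lemma no_hole_removed S v : (forall x, ~ hole_point S x) -> outer_boundary S v ->
  forall x, ~ hole_point (removed S v) x.
Proof.
move=> noh [Sv [i [_ outi]]] x [nSx nout].
have sub z : removed S v z -> S z by case.
case: (classic (x = v)) => [xv | xv].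
- apply: nout; rewrite xv; apply: outer_face_step (adj_nbr v i) _; first by case.
  exact: outer_face_sub sub outi.
- have nSx' : ~ S x by move=> Sx; apply: nSx.
  by apply: (noh x); split=> // /(outer_face_sub sub).
Qed.

Lemma simply_connected_removed S v :
  simply_connected S -> erodable S v -> simply_connected (removed S v).
Proof.
move=> [[l Sl] [Sconn noh]] [vred vout]; split; last split.
- by exists l => x [/Sl].
- exact: connected_removed.
- exact: no_hole_removed.
Qed.

Lemma boundary_removed S v x : boundary_point (removed S v) x ->
  boundary_point S x \/ adj v x /\ interior S x.
Proof.
move=> [[Sx xv] [i [_ outi]]]; case: (classic (boundary_point S x)) => [|nbd]; first by left.
have intx := interiorP Sx nbd; right; split=> //.
have -> : v = nbr x i.
  by apply: NNPP => vi; apply: outi; split; [apply: intx.2; apply: adj_nbr | move=> /esym].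
exact: adj_sym (adj_nbr x i).
Qed.

Lemma local_boundary_interior S v i k m : local_boundary S v i k -> 3 <= k -> m < 6 ->
  interior S (nbr v (i + m)) -> m = 4.
Proof.
move=> [_ [_ [/andP[k_gt0 _] [out _]]]] k_ge3 m_lt6 [Sw Nw].
have [m_lt_k | k_le_m] := ltnP m k; first by case: (out m m_lt_k).
case: (eqVneq m k) => [mk | m_neq_k].
- case: (out k.-1); first by lia.
  by apply: Nw; apply: adj_sym; rewrite mk -{2}(prednK k_gt0) -addn1 addnA; apply: adj_nbrS.
- case: (eqVneq m 5) => [m5 | ?]; last by lia.
  case: (out 0 k_gt0); apply: Nw; rewrite m5 addn0 [nbr v i]nbr_mod.
  by rewrite -[i %% 6](modnDr i 6) -nbr_mod (addnA i 5 1); apply: adj_nbrS.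
Qed.

Lemma SCE_interior_nbr S v : SCE S v -> exists c, forall x, adj v x -> interior S x -> x = c.
Proof.
move=> [_ [i [k [lb cnt]]]]; exists (nbr v (i + 4)) => _ [d [_ ->]].
have [m m6 ->] := nbr_shift v i d => intm.
by rewrite (local_boundary_interior lb _ m6 intm) //; rewrite /boundary_count in cnt; lia.
Qed.

Definition elig_consistent (S : pt -> Prop) (s : pst) : Prop :=
  forall j, j < 6 -> elig s j = true <-> S (port_pt s j).

Definition exclusive (P : finType) (C : config P) : Prop :=
  forall p q x, occupies (parts C p) x -> occupies (parts C q) x -> p = q.

(* Nothing in the model of [activate] forbids two particles on one point. *)
Definition dle_inv (P : finType) (C : config P) : Prop := DLE_invariants C /\ exclusive C.

Lemma clear_elig_consistent S v s :
  elig_consistent S s -> elig_consistent (removed S v) (clear_elig v s).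
Proof.
move=> cons j j6; rewrite /= j6 /=.
case: pt_eqbP => [E | NE]; first by split=> // -[].
by rewrite cons //; split=> [|[]] //.
Qed.

Lemma elig_consistent_removed_hd S s :
  elig_consistent S s -> elig_consistent (removed S (hd s)) s.
Proof. by move=> cons j /cons ->; split=> [Sj | []] //; split=> //; apply: nbr_neq. Qed.

Lemma expand_into_consistent S u v s : (forall y, adj u y -> S y) ->
  elig_consistent (removed S v) (expand_into u v s).
Proof.
move=> Nu j _; rewrite /= /port_pt /=.
case: pt_eqbP => [E | NE] /=; first by split=> // -[].
by split=> // _; split=> //; apply: Nu; apply: adj_nbr.
Qed.

Lemma boundary_occupied_hd (P : finType) (C : config P) x : DLE_invariants C ->
  boundary_point (Se C) x -> exists q, hd (parts C q) = x.
Proof.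
move=> [Itl [_ [Ibd _]]] bx; have [q [hq | tq]] := Ibd x bx; first by exists q.
by case: (Itl q x tq) => _ []; case: bx.
Qed.

Lemma upd_inv (P : finType) (C : config P) p s : dle_inv C ->
  hd s = hd (parts C p) -> ori s = ori (parts C p) -> elig s = elig (parts C p) ->
  (tl s = tl (parts C p) \/ tl s = None) -> dle_inv (mkC (upd (parts C) p s) (Se C)).
Proof.
move=> [I Iex] Ehd Eori Eel Etl; have [Itl [Isc [Ibd Iel]]] := I.
set f := upd (parts C) p s.
have f_port q : hd (f q) = hd (parts C q) /\ ori (f q) = ori (parts C q) /\
                elig (f q) = elig (parts C q).
  by rewrite /f /upd; case: eqP => [->|].
have f_tl q t : tl (f q) = Some t -> tl (parts C q) = Some t.
  by rewrite /f /upd; case: eqP => [-> | //]; case: Etl => ->.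
have f_occ q x : occupies (f q) x -> occupies (parts C q) x.
  by have [Eh _] := f_port q; rewrite /occupies Eh => -[|/f_tl]; [left | right].
split; [split; [|split; [exact: Isc | split]] | ].
- by move=> q t /f_tl; have [-> _] := f_port q; apply: Itl.
- move=> x /(boundary_occupied_hd I) [q hq].
  by exists q; left; have [-> _] := f_port q.
- by move=> q j; have [Eh [Eo Ee]] := f_port q; rewrite /port_pt Eh Eo Ee; apply: Iel.
- by move=> q1 q2 x /f_occ o1 /f_occ o2; apply: Iex o1 o2.
Qed.

Section Erosion.

Variables (P : finType) (C : config P) (p : P) (v : pt).
Hypotheses (HI : dle_inv C) (p_at_v : hd (parts C p) = v)
  (p_contracted : tl (parts C p) = None) (v_SCE : SCE (Se C) v).

Lemma occupies_eroding x : occupies (parts C p) x -> x = v.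
Proof. by rewrite /occupies p_contracted p_at_v => -[]. Qed.

Lemma occupies_v q : occupies (parts C q) v -> q = p.
Proof. by move=> qv; apply: HI.2 qv _; left. Qed.

Lemma erosion_inv s :
  (forall t, tl s = Some t -> removed (Se C) v (hd s) /\ ~ removed (Se C) v t) ->
  elig_consistent (removed (Se C) v) s ->
  (forall x, occupies s x -> x = v \/ ~ occupied C x) ->
  (forall x, adj v x -> interior (Se C) x -> ~ occupied C x -> occupies s x) ->
  (exists x, removed (Se C) v x) ->
  dle_inv (mkC (upd (clear_others C p v) p s) (removed (Se C) v)).
Proof.
have [[Itl [[Isc _] [Ibd Iel]]] Iex] := HI.
move=> s_tl s_elig s_occ s_fills Se'_ne; set f := upd _ p s.
have fE q : f q = if q == p then s else clear_elig v (parts C q).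
  by rewrite /f /upd /clear_others; case: eqP.
have occ_other x : occupied C x -> x <> v -> exists q, occupies (f q) x.
{ move=> [q qx] xv; exists q; rewrite fE; case: eqP => [qp | //].
  by case: xv; apply: occupies_eroding; rewrite -qp. }
have s_excl q x : q != p -> occupies s x -> ~ occupies (parts C q) x.
{ move=> qp /s_occ [-> /occupies_v | nocc qx]; first exact/eqP.
  by apply: nocc; exists q. }
split; [split; [|split; [split|split]] |].
- move=> q t; rewrite /= fE; case: eqP => [_ | /eqP qp]; first exact: s_tl.
  move=> /[dup] /Itl [Sq St] qt; split; last by case.
  by split=> // qv; case/eqP: qp; apply: occupies_v; left.
- exact: simply_connected_removed v_SCE.1.
- exact: Se'_ne.
- move=> x /[dup] [[[_ xv] _]] /boundary_removed [/Ibd occx | [vx intx]].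
  + exact: occ_other.
  + case: (classic (occupied C x)) => [occx | noccx]; first exact: occ_other.
    by exists p; rewrite /= fE eqxx; apply: s_fills.
- move=> q; rewrite /= fE; case: eqP => // _; exact: clear_elig_consistent (Iel q).
- move=> q1 q2 x; rewrite /= !fE.
  case: eqP => [-> | /eqP q1p]; case: eqP => [-> | /eqP q2p] //.
  + by move=> sx /(s_excl _ _ q2p sx).
  + by move=> q1x /(s_excl _ _ q1p) /(_ q1x).
  + exact: Iex.
Qed.

Lemma erode_follower_inv :
  (exists j, j < 6 /\ elig (parts C p) j = true) ->
  ~ (exists u, adj v u /\ removed (Se C) v u /\ forall q, ~ occupies (parts C q) u) ->
  dle_inv (mkC (upd (clear_others C p v) p (set_status Follower (parts C p)))
               (removed (Se C) v)).
Proof.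
have [[_ [_ [_ Iel]]] _] := HI.
move=> [j [j6 ej]] no_free; apply: erosion_inv => //.
- by move=> t /=; rewrite p_contracted.
- by rewrite -p_at_v; apply: elig_consistent_removed_hd; apply: Iel.
- by move=> x /occupies_eroding; left.
- move=> x vx [Sx _] noccx; case: no_free; exists x; split=> //; split.
  + by split=> // xv; apply: (@adj_irrefl v); rewrite -{2}xv.
  + by move=> q qx; apply: noccx; exists q.
- exists (port_pt (parts C p) j); split; first exact/(Iel p j j6).
  by rewrite /port_pt p_at_v; apply: nbr_neq.
Qed.

Lemma erode_expand_inv u : adj v u -> removed (Se C) v u ->
  (forall q, ~ occupies (parts C q) u) ->
  dle_inv (mkC (upd (clear_others C p v) p (expand_into u v (parts C p)))
               (removed (Se C) v)).
Proof.
have [[_ [_ [Ibd _]]] _] := HI.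
move=> vu [Su uv] free_u.
have nocc_u : ~ occupied C u by move=> [q]; apply: free_u.
have int_u : interior (Se C) u by apply: (interiorP Su) => /Ibd.
apply: erosion_inv.
- by move=> t [<-]; split=> //; case.
- exact: expand_into_consistent int_u.2.
- by move=> x [<- | [<-]]; [right | left].
- move=> x vx intx _; have [c unique_c] := SCE_interior_nbr v_SCE.
  by left; rewrite /= (unique_c x vx intx) (unique_c u vu int_u).
- by exists u.
Qed.

End Erosion.

Lemma step_inv (P : finType) (C C' : config P) p : dle_inv C -> activate C p C' -> dle_inv C'.
Proof.
move=> HI; case=> //.
- by move=> t _ _; apply: upd_inv; [ | | | | right].
- by move=> _ _ _ _; apply: upd_inv; [ | | | | left].
- by move=> _ _ _ _; apply: upd_inv; [ | | | | left].
- by move=> u _ p_cont _ _ vSCE vu u_rem u_free; apply: erode_expand_inv.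
- by move=> _ p_cont _ el vSCE no_free; apply: erode_follower_inv.
Qed.

Definition step_out (v : pt) : pt := if (0 <=? v.1)%Z then nbr v 0 else nbr v 3.

Lemma adj_step_out v : adj v (step_out v).
Proof. by rewrite /step_out; case: Z.leb; apply: adj_nbr. Qed.

Lemma pnorm_step_out v : pnorm (step_out v) = (pnorm v + 1)%Z.
Proof. by case: v => a b; rewrite /step_out /pnorm /nbr /=; case: Z.leb_spec => /=; lia. Qed.

Lemma pnorm_iter_step_out n v : pnorm (iter n step_out v) = (pnorm v + Z.of_nat n)%Z.
Proof. by elim: n => [|n IH] /=; rewrite ?pnorm_step_out ?IH; lia. Qed.

Lemma bounded_finite (A : pt -> Prop) M :
  (forall x, A x -> (pnorm x <= M)%Z) -> finite_set A.
Proof.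
move=> AM.
pose zs := List.map (fun n => (Z.of_nat n - M)%Z) (List.seq 0 (Z.to_nat (2 * M + 1))).
have zsP a : (Z.abs a <= M)%Z -> List.In a zs.
  move=> aM; apply/List.in_map_iff; exists (Z.to_nat (a + M)); split; first lia.
  by apply/List.in_seq; lia.
exists (List.list_prod zs zs) => [[a b]] /AM; rewrite /pnorm /= => abM.
by apply: List.in_prod; apply: zsP; lia.
Qed.

Lemma conn_outer_face O x w :
  outer_face O x -> conn (fun z => ~ O z) x w -> conn (outer_face O) x w.
Proof.
move=> + xw; elim: xw => [z _ | a b c _ ab bc IH] out_a; first exact: conn_refl.
exact: conn_step out_a ab (IH (outer_face_step (conn_l bc) (adj_sym ab) out_a)).
Qed.

Lemma area_not_outer_face O x : area O x <-> ~ outer_face O x.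
Proof.
split=> [[Ox | [_ nout]] out | nout]; [exact: out.1 Ox | exact: nout out |].
by case: (classic (O x)) => [Ox | nOx]; [left | right].
Qed.

Lemma area_no_hole O v : ~ hole_point (area O) v.
Proof.
move=> [nav nout]; apply: nout.
have out_v : outer_face O v by apply: NNPP => /area_not_outer_face.
split=> // n; have [w [nw vw]] := out_v.2 n; exists w; split=> //.
by apply: conn_sub (conn_outer_face out_v vw) => z out_z /area_not_outer_face; apply.
Qed.

Lemma area_boundary O x : boundary_point (area O) x -> O x.
Proof.
move=> [[// | [nOx nout]] [i [_ /area_not_outer_face/NNPP out_i]]].
by case: nout; apply: outer_face_step nOx (adj_nbr x i) out_i.
Qed.

Section BoundedShape.

Variables (O : pt -> Prop) (M : Z).
Hypothesis O_bounded : forall x, O x -> (pnorm x <= M)%Z.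

Lemma outer_face_far v : (M < pnorm v)%Z -> outer_face O v.
Proof.
have walk n w : (M < pnorm w)%Z -> conn (fun x => ~ O x) w (iter n step_out w).
  elim: n w => [|n IH] w Mw; first by apply: conn_refl => /O_bounded; lia.
  rewrite iterSr; apply: conn_step (adj_step_out w) _; first by move=> /O_bounded; lia.
  by apply: IH; rewrite pnorm_step_out; lia.
move=> Mv; split=> [/O_bounded | n]; first lia.
exists (iter (Z.to_nat (n - pnorm v)) step_out v); split; last exact: walk.
by rewrite pnorm_iter_step_out; lia.
Qed.

Lemma area_bounded x : area O x -> (pnorm x <= M)%Z.
Proof.
case=> [/O_bounded // | [_ nout]]; case: (Z.le_gt_cases (pnorm x) M) => // Mx.
by case: nout; apply: outer_face_far.
Qed.

(* Walking outwards from a hole point meets [O] before it is far enough to be in the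
   outer face. *)
Lemma hole_conn_shape n h : hole_point O h -> (M < pnorm h + Z.of_nat n)%Z ->
  exists2 o, O o & conn (area O) h o.
Proof.
elim: n h => [|n IH] h [nOh nout] Mh; first by case: nout; apply: outer_face_far; lia.
have ah : area O h by right.
case: (classic (O (step_out h))) => [Os | nOs].
  by exists (step_out h); last by apply: conn_step ah (adj_step_out h) (conn_refl _); left.
have hs : hole_point O (step_out h) by split=> // /(outer_face_step nOh (adj_step_out h)).
have [|o Oo so] := IH _ hs; first by rewrite pnorm_step_out; lia.
by exists o; last exact: conn_step ah (adj_step_out h) so.
Qed.

Lemma area_connected : connected O -> connected (area O).
Proof.
move=> Oconn.
have to_O x : area O x -> exists2 o, O o & conn (area O) x o.
  case=> [Ox | hx]; first by exists x; last by apply: conn_refl; left.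
  by apply: (hole_conn_shape (n := Z.to_nat (M + 1 - pnorm x))) => //; lia.
move=> x y /to_O [ox Ox xo] /to_O [oy Oy yo].
apply: conn_trans xo (conn_trans _ (conn_sym yo)).
by apply: conn_sub (Oconn _ _ Ox Oy) => z; left.
Qed.

Lemma area_simply_connected : connected O -> simply_connected (area O).
Proof.
move=> Oconn; split; last split.
- exact: bounded_finite area_bounded.
- exact: area_connected.
- exact: area_no_hole.
Qed.

End BoundedShape.

Lemma occupied_bounded (P : finType) (C : config P) :
  exists M, forall x, occupied C x -> (pnorm x <= M)%Z.
Proof.
suff [M HM] : exists M,
    forall q, q \in enum P -> forall x, occupies (parts C q) x -> (pnorm x <= M)%Z.
  by exists M => x [q]; apply: HM; rewrite mem_enum.
elim: (enum P) => [|q s [M HM]]; first by exists 0%Z.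
exists (Z.max (pnorm (hd (parts C q)))
              (Z.max (if tl (parts C q) is Some t then pnorm t else 0) M)) => q'.
by rewrite in_cons => /orP [/eqP -> x [<- | -> /=] | /HM q'M x /q'M]; lia.
Qed.

Lemma init_inv (P : finType) (C : config P) : permitted_initial C -> dle_inv C.
Proof.
move=> [[p0 _] [contracted [hd_inj [Oconn [_ [init_elig init_Se]]]]]].
have SeE : Se C = area (occupied C).
  by apply: functional_extensionality => x; apply: propositional_extensionality.
have [M OM] := occupied_bounded C.
split; [split; [|split; [split|split]] |]; rewrite ?SeE.
- by move=> q t; rewrite contracted.
- exact: area_simply_connected OM Oconn.
- by exists (hd (parts C p0)); left; exists p0; left.
- exact: area_boundary.
- by move=> q j j6; rewrite init_elig // area_not_outer_face.
- move=> q1 q2 x; rewrite /occupies !contracted => -[h1 | //] [h2 | //].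
  by apply: hd_inj; rewrite h1 h2.
Qed.

Theorem lemma4p2 (P : finType) (exec : nat -> config P) (sched : nat -> P) :
  execution exec sched -> fair sched ->
  forall k, DLE_invariants (exec k).
Proof.
move=> [init step] _ k; suff: dle_inv (exec k) by case.
by elim: k => [|k IH]; [apply: init_inv | apply: step_inv IH (step k)].
Qed.
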